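(* Let $X$ be a metric space with integer valued metric. Then for every $f\in\mathrm{E}(X)$ and every integer $m\ge1$ there exists a function $f'\in\mathrm{E}'(X)$ with values in $\frac1m\mathbb{Z}$ such that $\|f-f'\|_\infty\le\frac1{2m}$.
   Context: $\Delta(X)=\{f\in\mathbb R^X: f(x)+f(y)\ge d(x,y)\ \forall x,y\in X\}$ with the pointwise order; $\mathrm{E}(X)$ is its set of minimal elements. For $f\colon X\to\mathbb R$, $A(f)$ is the set of unordered pairs $\{x,y\}$ ($x=y$ allowed) with $f(x)+f(y)=d(x,y)$, and $\mathrm{E}'(X)=\{f\in\Delta(X):\bigcup A(f)=X\}$ (a subset of $\mathrm{E}(X)$). $\|f-g\|_\infty=\sup_x|f(x)-g(x)|$. *)

From Stdlib Require Import Reals ZArith.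
Open Scope R_scope.

Definition is_metric {X : Type} (d : X -> X -> R) : Prop :=
  (forall x y, d x y = 0 <-> x = y) /\
  (forall x y, d x y = d y x) /\
  (forall x y z, d x z <= d x y + d y z).

Definition integer_valued {X : Type} (d : X -> X -> R) : Prop :=
  forall x y, exists n : Z, d x y = IZR n.

Definition Delta {X : Type} (d : X -> X -> R) (f : X -> R) : Prop :=
  forall x y, f x + f y >= d x y.

Definition E {X : Type} (d : X -> X -> R) (f : X -> R) : Prop :=
  Delta d f /\
  forall g : X -> R, Delta d g -> (forall x, g x <= f x) -> forall x, g x = f x.

Definition in_A {X : Type} (d : X -> X -> R) (f : X -> R) (x y : X) : Prop :=
  f x + f y = d x y.

(* E'(X) = { f in Delta(X) : union of A(f) = X } *)
Definition E' {X : Type} (d : X -> X -> R) (f : X -> R) : Prop :=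
  Delta d f /\ forall x, exists y, in_A d f x y.

From Pilot Require Import Defs.
From Stdlib Require Import Reals ZArith Lra Lia Classical ClassicalDescription.
From mathcomp Require classical_sets.
Open Scope R_scope.

(* Scaling by [m] keeps the metric integer valued, so it suffices to round [f] to integers
   within [1/2].  Round every point to a nearest integer; the only freedom is at
   half-integer points, and rounding two of them down breaks [Delta] exactly when the pair
   is tight for [f].  So round down on a maximal independent set [S] (Zorn) of the
   tightness graph on half-integer points, and up elsewhere.  Then [Delta] holds by
   integrality, half-integer points outside [S] are tight with a neighbour in [S], and
   every other point is rounded strictly below [f x + 1/2]; minimality of [f] supplies a
   partner whose slack is smaller than that gap, and integrality makes the pair tight. *)

Lemma maximal_independent_set (X : Type) (V : X -> Prop) (adj : X -> X -> Prop) :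
  (forall x y, adj x y -> adj y x) ->
  exists S : X -> Prop,
    (forall x, S x -> V x) /\
    (forall x y, S x -> S y -> ~ adj x y) /\
    (forall x, V x -> ~ adj x x -> ~ S x -> exists y, S y /\ adj x y).
Proof.
  intros adj_sym.
  set (independent := fun A : X -> Prop =>
    (forall x, A x -> V x) /\ (forall x y, A x -> A y -> ~ adj x y)).
  destruct (@classical_sets.Zorn_bigcup X independent) as [S [[SV Sind] Smax]].
  { intros F FI Ftot. split.
    - intros x [A FA Ax]. exact (proj1 (FI A FA) x Ax).
    - intros x y [A FA Ax] [B FB By].
      destruct (Ftot A B FA FB) as [AB | BA].
      + exact (proj2 (FI B FB) x y (AB x Ax) By).
      + exact (proj2 (FI A FA) x y Ax (BA y By)). }
  exists S. split; [exact SV | split; [exact Sind |]].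
  intros x Vx no_loop notSx. apply NNPP. intro no_neighbour.
  apply (Smax (fun z => S z \/ z = x)).
  - split; [intros z Sz; left; exact Sz |].
    intro incl. exact (notSx (incl x (or_intror eq_refl))).
  - split.
    + intros z [Sz | ->]; [exact (SV z Sz) | exact Vx].
    + intros u v [Su | ->] [Sv | ->] Auv.
      * exact (Sind u v Su Sv Auv).
      * apply no_neighbour. exists u. split; [exact Su | exact (adj_sym u x Auv)].
      * apply no_neighbour. exists v. split; [exact Sv | exact Auv].
      * exact (no_loop Auv).
Qed.

Lemma IZR_lt_succ_le (p q : Z) : IZR p < IZR q + 1 -> (p <= q)%Z.
Proof. intro H. rewrite <- plus_IZR in H. apply lt_IZR in H. lia. Qed.

Definition nearest (t : R) : Z := (up (t + 1/2) - 1)%Z.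

Lemma nearest_spec (t : R) : t - 1/2 < IZR (nearest t) <= t + 1/2.
Proof. unfold nearest. rewrite minus_IZR. destruct (archimed (t + 1/2)). lra. Qed.

Lemma nearest_half_integer (k : Z) : nearest (IZR k + 1/2) = (k + 1)%Z.
Proof.
  pose proof (nearest_spec (IZR k + 1/2)) as [lo hi].
  assert (nearest (IZR k + 1/2) <= k + 1)%Z by (apply IZR_lt_succ_le; rewrite plus_IZR; lra).
  assert (k + 1 <= nearest (IZR k + 1/2))%Z by (apply IZR_lt_succ_le; rewrite plus_IZR; lra).
  lia.
Qed.

Lemma E_almost_tight (X : Type) (d : X -> X -> R) (f : X -> R) :
  (forall x y, d x y = d y x) -> E d f ->
  forall x eps, 0 < eps -> exists y, f x + f y < d x y + eps.
Proof.
  (* Otherwise lowering [f] at [x] by [eps/2] stays in [Delta(X)], against minimality. *)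
  intros hsym [hDelta hmin] x eps heps. apply NNPP. intro no_y.
  assert (far : forall y, f x + f y >= d x y + eps).
  { intro y. apply Rnot_lt_ge. intro C. apply no_y. exists y. exact C. }
  set (g := fun z => if excluded_middle_informative (z = x) then f x - eps/2 else f z).
  (* [Reals] also exports a [Delta], hence the qualified name. *)
  assert (gDelta : Defs.Delta d g).
  { intros u v. unfold g.
    destruct (excluded_middle_informative (u = x)) as [-> | nu];
    destruct (excluded_middle_informative (v = x)) as [-> | nv].
    - specialize (far x). lra.
    - specialize (far v). lra.
    - specialize (far u). rewrite (hsym u x). lra.
    - apply hDelta. }
  assert (g_le : forall z, g z <= f z).
  { intro z. unfold g. destruct (excluded_middle_informative (z = x)) as [-> | _]; lra. }
  pose proof (hmin g gDelta g_le x) as gx. unfold g in gx.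
  destruct (excluded_middle_informative (x = x)) as [_ | c]; [lra | exact (c eq_refl)].
Qed.

Section HalfIntegerRounding.

Variables (X : Type) (d : X -> X -> R) (f : X -> R).
Hypothesis hsym : forall x y, d x y = d y x.
Hypothesis hint : integer_valued d.
Hypothesis hf : E d f.

Definition half_integer (x : X) : Prop := exists k : Z, f x = IZR k + 1/2.

Variable S : X -> Prop.
Hypothesis S_half_integer : forall x, S x -> half_integer x.
Hypothesis S_independent : forall x y, S x -> S y -> ~ in_A d f x y.
Hypothesis S_maximal :
  forall x, half_integer x -> ~ S x -> exists y, S y /\ in_A d f x y.

Definition rounding (x : X) : Z :=
  if excluded_middle_informative (S x) then (nearest (f x) - 1)%Z else nearest (f x).

Lemma rounding_bounds x : f x - 1/2 <= IZR (rounding x) <= f x + 1/2.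
Proof.
  unfold rounding. pose proof (nearest_spec (f x)).
  destruct (excluded_middle_informative (S x)) as [Sx | _]; [| lra].
  destruct (S_half_integer x Sx) as [k hk].
  rewrite minus_IZR, hk, nearest_half_integer, plus_IZR. lra.
Qed.

Lemma rounding_S x : S x -> IZR (rounding x) = f x - 1/2.
Proof.
  intro Sx. unfold rounding. destruct (excluded_middle_informative (S x)) as [_ | []]; [| exact Sx].
  destruct (S_half_integer x Sx) as [k hk].
  rewrite minus_IZR, hk, nearest_half_integer, plus_IZR. lra.
Qed.

Lemma rounding_not_S x : ~ S x -> IZR (rounding x) = IZR (nearest (f x)).
Proof.
  intro nSx. unfold rounding.
  destruct (excluded_middle_informative (S x)) as [Sx | _]; [contradiction | reflexivity].
Qed.

Lemma rounding_Delta : Defs.Delta d (fun x => IZR (rounding x)).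
Proof.
  intros x y. destruct (hint x y) as [D hD]. rewrite hD. apply Rle_ge.
  pose proof (proj1 hf x y) as fxy. rewrite hD in fxy.
  rewrite <- plus_IZR. apply IZR_le.
  destruct (classic (S x)) as [Sx | nSx]; [destruct (classic (S y)) as [Sy | nSy] |].
  - (* both rounded down: [x, y] is not tight, and [f x + f y] is an integer *)
    destruct (S_half_integer x Sx) as [k hk], (S_half_integer y Sy) as [l hl].
    assert (loose : f x + f y <> IZR D).
    { intro e. apply (S_independent x y Sx Sy). unfold in_A. rewrite hD. exact e. }
    assert (gap : (D + 1 <= k + l + 1)%Z)
      by (apply IZR_lt_succ_le; rewrite !plus_IZR; lra).
    apply IZR_le in gap. rewrite !plus_IZR in gap.
    apply IZR_lt_succ_le. rewrite plus_IZR, (rounding_S x Sx), (rounding_S y Sy). lra.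
  - pose proof (nearest_spec (f y)). pose proof (rounding_bounds x).
    apply IZR_lt_succ_le. rewrite plus_IZR, (rounding_not_S y nSy). lra.
  - pose proof (nearest_spec (f x)). pose proof (rounding_bounds y).
    apply IZR_lt_succ_le. rewrite plus_IZR, (rounding_not_S x nSx). lra.
Qed.

Lemma rounding_tight x : exists y, in_A d (fun z => IZR (rounding z)) x y.
Proof.
  destruct (classic (half_integer x /\ ~ S x)) as [[hx nSx] | other].
  - destruct (S_maximal x hx nSx) as [y [Sy txy]]. exists y. unfold in_A in *.
    destruct hx as [k hk].
    rewrite (rounding_not_S x nSx), (rounding_S y Sy), hk, nearest_half_integer, plus_IZR.
    rewrite hk in txy. lra.
  - (* [x] is rounded strictly below [f x + 1/2]; an almost tight partner is then tight *)
    assert (below : IZR (rounding x) < f x + 1/2).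
    { destruct (classic (S x)) as [Sx | nSx]; [rewrite (rounding_S x Sx); lra |].
      pose proof (rounding_bounds x) as [_ hi]. destruct hi as [lt | eq]; [exact lt |].
      exfalso. apply other. split; [| exact nSx].
      exists (rounding x - 1)%Z. rewrite minus_IZR. lra. }
    destruct (E_almost_tight X d f hsym hf x (f x + 1/2 - IZR (rounding x))) as [y hy]; [lra |].
    exists y. destruct (hint x y) as [D hD]. unfold in_A. rewrite hD in hy |- *.
    pose proof (rounding_bounds y).
    assert (upper : (rounding x + rounding y <= D)%Z)
      by (apply IZR_lt_succ_le; rewrite plus_IZR; lra).
    apply IZR_le in upper. rewrite plus_IZR in upper.
    pose proof (rounding_Delta x y) as lower. rewrite hD in lower. lra.
Qed.

End HalfIntegerRounding.

Theorem E_integer_rounding (X : Type) (d : X -> X -> R)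
  (hsym : forall x y, d x y = d y x) (hdiag : forall x, d x x = 0)
  (hint : integer_valued d) (f : X -> R) (hf : E d f) :
  exists g : X -> Z,
    E' d (fun x => IZR (g x)) /\ forall x, Rabs (f x - IZR (g x)) <= 1/2.
Proof.
  assert (tight_sym : forall x y, in_A d f x y -> in_A d f y x).
  { unfold in_A. intros x y e. rewrite hsym. lra. }
  destruct (maximal_independent_set X (half_integer X f) (in_A d f) tight_sym)
    as [S [S_half [S_indep S_max]]].
  assert (no_loop : forall x, half_integer X f x -> ~ in_A d f x x).
  { intros x [k hk] loop. unfold in_A in loop. rewrite hdiag, hk in loop.
    assert (odd_zero : IZR (2 * k + 1) = 0) by (rewrite plus_IZR, mult_IZR; lra).
    apply eq_IZR in odd_zero. lia. }
  exists (rounding X f S). split; [split |].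
  - exact (rounding_Delta X d f hint hf S S_half S_indep).
  - intro x. apply (rounding_tight X d f hsym hint hf S S_half S_indep).
    intros y hy nSy. exact (S_max y hy (no_loop y hy) nSy).
  - intro x. pose proof (rounding_bounds X f S S_half x). apply Rabs_le. lra.
Qed.

Lemma E_scale (X : Type) (d : X -> X -> R) (f : X -> R) (c : R) :
  0 < c -> E d f -> E (fun x y => c * d x y) (fun x => c * f x).
Proof.
  intros hc [hDelta hmin]. split.
  - intros x y. specialize (hDelta x y). apply Rle_ge.
    rewrite <- Rmult_plus_distr_l. apply Rmult_le_compat_l; lra.
  - intros g gDelta g_le x.
    assert (unscaled : Defs.Delta d (fun z => g z / c)).
    { intros u v. specialize (gDelta u v). apply Rle_ge.
      apply (Rmult_le_reg_l c); [exact hc |].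
      replace (c * (g u / c + g v / c)) with (g u + g v) by (field; lra). lra. }
    assert (unscaled_le : forall z, g z / c <= f z).
    { intro z. specialize (g_le z). apply (Rmult_le_reg_l c); [exact hc |].
      replace (c * (g z / c)) with (g z) by (field; lra). exact g_le. }
    pose proof (hmin _ unscaled unscaled_le x) as e. cbv beta in e.
    rewrite <- e. field. lra.
Qed.

Lemma E'_unscale (X : Type) (d : X -> X -> R) (g : X -> R) (c : R) :
  0 < c -> E' (fun x y => c * d x y) g -> E' d (fun x => g x / c).
Proof.
  intros hc [gDelta gtight]. split.
  - intros u v. specialize (gDelta u v). apply Rle_ge.
    apply (Rmult_le_reg_l c); [exact hc |].
    replace (c * (g u / c + g v / c)) with (g u + g v) by (field; lra). lra.
  - intro x. destruct (gtight x) as [y hy]. exists y. unfold in_A in *.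
    replace (g x / c + g y / c) with ((g x + g y) / c) by (field; lra).
    rewrite hy. field. lra.
Qed.

Theorem proposition4p4 (X : Type) (d : X -> X -> R)
  (hd : is_metric d) (hint : integer_valued d)
  (f : X -> R) (hf : E d f) (m : nat) (hm : (1 <= m)%nat) :
  exists f' : X -> R,
    E' d f' /\
    (forall x, exists k : Z, f' x = IZR k / INR m) /\
    (forall x, Rabs (f x - f' x) <= 1 / (2 * INR m)).
Proof.
  destruct hd as [hzero [hsym _]].
  assert (hmpos : 0 < INR m) by (apply lt_0_INR; lia).
  assert (scaled_int : integer_valued (fun x y => INR m * d x y)).
  { intros x y. destruct (hint x y) as [n hn]. exists (Z.of_nat m * n)%Z.
    rewrite mult_IZR, <- INR_IZR_INZ, hn. reflexivity. }
  assert (scaled_sym : forall x y, INR m * d x y = INR m * d y x)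
    by (intros x y; rewrite hsym; reflexivity).
  assert (scaled_diag : forall x, INR m * d x x = 0)
    by (intro x; rewrite (proj2 (hzero x x) eq_refl); ring).
  destruct (E_integer_rounding X (fun x y => INR m * d x y) scaled_sym scaled_diag scaled_int (fun x => INR m * f x) (E_scale X d f (INR m) hmpos hf))
    as [g [g_E' g_close]].
  exists (fun x => IZR (g x) / INR m). split; [| split].
  - exact (E'_unscale X d _ (INR m) hmpos g_E').
  - intro x. exists (g x). reflexivity.
  - intro x. specialize (g_close x).
    assert (hminv : 0 < / INR m) by (apply Rinv_0_lt_compat, hmpos).
    replace (f x - IZR (g x) / INR m) with ((INR m * f x - IZR (g x)) * / INR m)
      by (field; lra).
    replace (1 / (2 * INR m)) with (1/2 * / INR m) by (field; lra).
    rewrite Rabs_mult, (Rabs_pos_eq (/ INR m)) by lra.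
    apply Rmult_le_compat_r; lra.
Qed.
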